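(* Let $n,t\in\mathbb{N}$ with $n > t \geq 2$. Then (a) $d_{\max}(n, n-t)=3$ if and only if $2^{t-1} < n < 2^{t}$; (b) $d_{\max}(n, n-t)=4$ if and only if $s_{\max}(t) \leq n \leq 2^{t-1}$; (c) $d_{\max}(n, n-t)=5$ if and only if $s_{\max}(t-1) < n < s_{\max}(t)$; (d) $d_{\max}(n, n-t)\geq 6$ if and only if $n \leq s_{\max}(t-1)$.
   Context: $\mathbb{F}_2^t$ denotes the $t$-dimensional vector space over $\mathbb{F}_2$. A subset $M\subseteq \mathbb{F}_2^t$ is called Sidon if $m_1+m_2\neq m_3+m_4$ for all pairwise distinct $m_1,m_2,m_3,m_4\in M$. $s_{\max}(t)$ denotes the maximum size of a Sidon set in $\mathbb{F}_2^t$. A binary linear code of length $n$ and dimension $k$ is a $k$-dimensional subspace of $\mathbb{F}_2^n$; its minimum distance is the minimum Hamming weight of its nonzero codewords. $d_{\max}(n,k)$ is the maximum $d$ such that there exists a binary linear code of length $n$, dimension $k$ and minimum distance $d$. *)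

From mathcomp Require Import all_boot all_order all_algebra.
Set Implicit Arguments. Unset Strict Implicit. Unset Printing Implicit Defensive.
Import GRing.Theory.
Local Open Scope ring_scope.

Definition sidon (t : nat) (M : {set 'rV['F_2]_t}) : bool :=
  [forall m1 in M, forall m2 in M, forall m3 in M, forall m4 in M,
     uniq [:: m1; m2; m3; m4] ==> (m1 + m2 != m3 + m4)].

Definition smax (t : nat) : nat :=
  \max_(M : {set 'rV['F_2]_t} | sidon M) #|M|.

Definition wt (n : nat) (v : 'rV['F_2]_n) : nat := #|[set i | v 0 i != 0]|.

(* A binary linear [n,k] code is represented by a generator matrix
   G : 'M_(k,n) of rank k; its codewords are the rows v with (v <= G)%MS.
   Minimum distance = minimum weight of a nonzero codeword. *)
Definition mindist (k n : nat) (G : 'M['F_2]_(k, n)) : nat :=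
  \big[minn/n]_(v : 'rV['F_2]_n | (v <= G)%MS && (v != 0)) wt v.

Definition dmax (n k : nat) : nat :=
  \max_(G : 'M['F_2]_(k, n) | \rank G == k) mindist G.

(* A binary [n, n - t] code of minimum distance at least D >= 3 is the kernel of
   an n x t parity-check matrix whose rows are n distinct vectors of F_2^t, no
   nonempty set of fewer than D of which sums to 0.  So d_max(n, n - t) >= D iff
   F_2^t contains an n-set S with this property, and it remains to decide when
   such sets exist for D = 3, 4, 5, 6.
   - D = 3: S avoids 0, hence n < 2^t.
   - D = 5: S works iff 0 is not in S and S with 0 added is Sidon; a Sidon set
     can be translated to contain 0, hence n < s_max(t).
   - D even: prefixing the vectors of B in F_2^(t-1) with a parity bit 1 makes
     every odd sum nonzero; conversely, dividing F_2^t by the line through some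
     s in S, with 0 taking the place of s, yields such a B.  So only the sums of
     an even number (< D) of elements of B matter: no condition at all for
     D = 4 (n <= 2^(t-1)), the Sidon condition for D = 6 (n <= s_max(t-1)). *)

From mathcomp Require Import all_boot all_order all_algebra.
Import GRing.Theory.
Local Open Scope ring_scope.
Set Implicit Arguments. Unset Strict Implicit. Unset Printing Implicit Defensive.

Lemma leq_bigmaxP (I : finType) (P : pred I) (F : I -> nat) m : (0 < m)%N ->
  reflect (exists2 i, P i & m <= F i)%N (m <= \max_(i | P i) F i)%N.
Proof.
move=> m0; apply: (iffP idP) => [|[i Pi mFi]]; last exact: bigmax_sup Pi mFi.
have [i0 Pi0 | P0] := pickP P; last by rewrite big_pred0 // leqNgt m0.
rewrite (bigmax_eq_arg _ Pi0) => mF.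
by exists [arg max_(i > i0 | P i) F i] => //; case: arg_maxnP.
Qed.

Lemma exists_subset_card (T : finType) (A : {set T}) k :
  (k <= #|A|)%N -> exists2 B : {set T}, B \subset A & #|B| = k.
Proof.
case/card_geqP => s [us <- sA]; exists [set x in s].
  by apply/subsetP => x; rewrite inE; apply: sA.
by rewrite cardsE; apply/card_uniqP.
Qed.

Lemma exists_kernel_mx (F : fieldType) m n t (G : 'M[F]_(m, n)) :
  (\rank G + t)%N = n ->
  exists H : 'M[F]_(n, t), forall v : 'rV_n, (v <= G)%MS = (v *m H == 0).
Proof.
move=> rGt; pose C := cokermx G.
have rC : \rank C = t by rewrite mxrank_coker -[X in (X - _)%N]rGt addKn.
exists (col_base C *m pid_mx (\rank C)) => v.
rewrite submxE -[cokermx G](mulmx_base C) mulmxA mulmx_free_eq0 ?row_base_free //.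
by rewrite mulmxA [RHS]mulmx_free_eq0 // /row_free rank_pid_mx // rC.
Qed.

Lemma exists_submx_rank (F : fieldType) m n k (A : 'M[F]_(m, n)) :
  (k <= \rank A)%N -> exists2 G : 'M[F]_(k, n), \rank G = k & (G <= A)%MS.
Proof.
move=> kA; exists (pid_mx k *m row_base A).
  apply/eqP; rewrite eqn_leq rank_leq_row /=.
  apply: leq_trans (mxrank_mul_min _ _).
  by rewrite rank_pid_mx // (eqP (row_base_free A)) addnK.
by rewrite (submx_trans (submxMl _ _)) ?eq_row_base.
Qed.

Lemma F2_eq1 (x : 'F_2) : x != 0 -> x = 1.
Proof. by case: x => [[|[|i]] Hi] // _; apply/val_inj. Qed.

Section F2Vectors.

Variable t : nat.
Implicit Types x y : 'rV['F_2]_t.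

Lemma addrr_F2 x : x + x = 0.
Proof.
by apply/matrixP => i j; rewrite !mxE; case: (x i j) => [[|[|k]] ?] //; apply/val_inj.
Qed.

Lemma oppr_F2 x : - x = x.
Proof. by apply/eqP; rewrite eq_sym -subr_eq0 opprK addrr_F2. Qed.

Lemma addr_eq0_F2 x y : (x + y == 0) = (x == y).
Proof. by rewrite -{1}[y]oppr_F2 subr_eq0. Qed.

Lemma mulrn_F2 x k : x *+ k = x *+ odd k.
Proof.
by rewrite -{1}(odd_double_half k) mulrnDr -mul2n mulrnA mulr2n addrr_F2 mul0rn addr0.
Qed.

Lemma card_rV_F2 : #|{: 'rV['F_2]_t}| = (2 ^ t)%N.
Proof. by rewrite card_mx card_Fp // mul1n. Qed.

End F2Vectors.

(* The cast makes the sum use the standard additive structure of row vectors;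
   without it, rewriting with [add0r] and similar lemmas fails on these sums. *)
Definition nonzero_sums t (P : pred nat) (S : {set 'rV['F_2]_t}) :=
  forall A : {set 'rV['F_2]_t}, A \subset S -> P #|A| ->
    \sum_(x in A) (x : 'rV['F_2]_t) != 0.

Section NonzeroSums.

Variable t : nat.
Implicit Types (P : pred nat) (S M : {set 'rV['F_2]_t}).

Lemma nonzero_sumsS P S1 S2 :
  S1 \subset S2 -> nonzero_sums P S2 -> nonzero_sums P S1.
Proof. by move=> sS12 nzS A AS; apply/nzS/(subset_trans AS). Qed.

Lemma nonzero_sums_pred1 P S :
  nonzero_sums P S <-> (forall k, P k -> nonzero_sums (pred1 k) S).
Proof.
split=> [nzS k Pk A AS /eqP cardA | nzS A AS PA]; last exact: nzS _ PA A AS (eqxx _).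
by apply: nzS AS _; rewrite cardA.
Qed.

Lemma nonzero_sums_seqP P S :
  nonzero_sums P S <->
  (forall s, uniq s -> {subset s <= S} -> P (size s) -> \sum_(x <- s) x != 0).
Proof.
split=> [nzS s us sS Ps | nzS A AS PA].
  have <- : \sum_(x in [set x in s]) x = \sum_(x <- s) x.
    by rewrite big_uniq //; apply: eq_bigl => x; rewrite inE.
  apply: nzS; first by apply/subsetP => x; rewrite inE; apply: sS.
  by rewrite cardsE (card_uniqP us).
rewrite -big_enum; apply: nzS; first exact: enum_uniq.
  by move=> x; rewrite mem_enum; apply/subsetP.
by rewrite -cardE.
Qed.

Lemma nonzero_sums_imset (I : finType) (f : I -> 'rV['F_2]_t) (D : {set I}) P :
  {in D &, injective f} ->
  nonzero_sums P (f @: D) <->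
  (forall J : {set I}, J \subset D -> P #|J| -> \sum_(i in J) f i != 0).
Proof.
move=> injf; split=> [nzS J JD PJ | nzJ A AfD PA].
  have injJ : {in J &, injective f} := sub_in2 (subsetP JD) injf.
  rewrite -(big_imset idfun) //; apply: nzS; first exact: imsetS.
  by rewrite card_in_imset.
pose J := D :&: f @^-1: A.
have injJ : {in J &, injective f} := sub_in2 (subsetP (subsetIl _ _)) injf.
have defA : A = f @: J.
  apply/setP => y; apply/idP/imsetP => [yA | [x] /[!inE] /andP[_ fxA] -> //].
  by case/imsetP: (subsetP AfD y yA) => x xD yfx; exists x; rewrite // !inE xD -yfx.
rewrite defA big_imset //; apply: nzJ; first exact: subsetIl.
by rewrite -(card_in_imset injJ) -defA.
Qed.

Lemma nonzero_sums1 S : nonzero_sums (pred1 1%N) S <-> 0 \notin S.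
Proof.
split=> [nzS | S0 A AS /cards1P[x defA]].
  apply/negP => S0; have := nzS [set 0]; rewrite sub1set S0 cards1 big_set1 eqxx.
  by move/(_ isT isT).
rewrite defA big_set1; apply: contraNneq S0 => <-.
by apply: (subsetP AS); rewrite defA set11.
Qed.

Lemma nonzero_sums2 S : nonzero_sums (pred1 2%N) S.
Proof.
move=> A _ /cards2P[x [y [xy ->]]].
by rewrite big_setU1 ?big_set1 ?inE //= addr_eq0_F2.
Qed.

Lemma nonzero_sums_setU0 k S : 0 \notin S ->
  nonzero_sums (pred1 k.+1) (0 |: S) <->
  nonzero_sums (pred1 k) S /\ nonzero_sums (pred1 k.+1) S.
Proof.
move=> S0; split=> [nzS | [nzk nzk1] A AS /eqP cardA].
  split; last exact: nonzero_sumsS (subsetUr _ _) nzS.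
  move=> A AS /eqP cardA.
  have A0 : 0 \notin A by apply: contra S0; apply: (subsetP AS).
  have := nzS (0 |: A) (setUS _ AS).
  by rewrite big_setU1 //= add0r cardsU1 A0 cardA; apply.
have [A0 | A0] := boolP (0 \in A).
  rewrite (big_setD1 _ A0) /= add0r; apply: nzk.
    apply/subsetP => x /[!inE] /andP[x0 xA].
    by move: (subsetP AS x xA); rewrite !inE (negbTE x0).
  by move: cardA; rewrite (cardsD1 0) A0 add1n /= => -[->].
apply: nzk1; last by rewrite /= cardA.
apply/subsetP => x xA; move: (subsetP AS x xA); rewrite !inE => /predU1P[x0|//].
by move: A0; rewrite -x0 xA.
Qed.

Lemma nonzero_sums_translate P S a : (forall k, P k -> ~~ odd k) ->
  nonzero_sums P S -> nonzero_sums P [set x + a | x in S].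
Proof.
move=> Peven nzS; apply/nonzero_sums_imset => [x y _ _|J JS PJ]; first exact: addIr.
rewrite big_split /= sumr_const mulrn_F2 (negbTE (Peven _ PJ)) /= addr0.
exact: nzS.
Qed.

Lemma sidon_nonzero_sums M : sidon M <-> nonzero_sums (pred1 4%N) M.
Proof.
split=> [sidM | /nonzero_sums_seqP nzM].
  apply/nonzero_sums_seqP; case=> [|a [|b [|c [|d [|]]]]] //= us sM _.
  have [aM bM cM dM] : [/\ a \in M, b \in M, c \in M & d \in M].
    by split; apply: sM; rewrite !inE eqxx ?orbT.
  rewrite !big_cons big_nil addr0 addrA addr_eq0_F2.
  by move: sidM => /forall_inP/(_ a aM)/forall_inP/(_ b bM)/forall_inP/(_ c cM)
    /forall_inP/(_ d dM)/implyP; apply.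
apply/forall_inP => a aM; apply/forall_inP => b bM; apply/forall_inP => c cM.
apply/forall_inP => d dM; apply/implyP => us.
have := nzM [:: a; b; c; d] us; rewrite !big_cons big_nil addr0 addrA addr_eq0_F2.
by apply=> // x; rewrite !inE => /or4P[] /eqP->.
Qed.

Lemma nonzero_sums_below3 S : nonzero_sums (fun k => 0 < k < 3)%N S <-> 0 \notin S.
Proof.
split=> [/nonzero_sums_pred1 nzS | S0]; first exact/nonzero_sums1/nzS.
apply/nonzero_sums_pred1 => -[|[|[|k]]] //= _.
  exact/nonzero_sums1.
exact: nonzero_sums2.
Qed.

Lemma nonzero_sums_below5 S :
  nonzero_sums (fun k => 0 < k < 5)%N S <-> 0 \notin S /\ sidon (0 |: S).
Proof.
split=> [/nonzero_sums_pred1 nzS | [S0 /sidon_nonzero_sums sidS]].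
  have S0 : 0 \notin S by apply/nonzero_sums1/nzS.
  split=> //; apply/sidon_nonzero_sums/(nonzero_sums_setU0 3 S0).
  by split; apply: nzS.
have [nz3 nz4] := (nonzero_sums_setU0 3 S0).1 sidS.
apply/nonzero_sums_pred1 => -[|[|[|[|[|k]]]]] //= _.
- exact/nonzero_sums1.
- exact: nonzero_sums2.
Qed.

Lemma nonzero_sums_even_below4 S :
  nonzero_sums (fun k => (0 < k < 4) && ~~ odd k)%N S.
Proof. by apply/nonzero_sums_pred1 => -[|[|[|[|k]]]] //= _; apply: nonzero_sums2. Qed.

Lemma nonzero_sums_even_below6 S :
  nonzero_sums (fun k => (0 < k < 6) && ~~ odd k)%N S <-> sidon S.
Proof.
split=> [/nonzero_sums_pred1 nzS | /sidon_nonzero_sums sidS].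
  exact/sidon_nonzero_sums/nzS.
by apply/nonzero_sums_pred1 => -[|[|[|[|[|[|k]]]]]] //= _; apply: nonzero_sums2.
Qed.

End NonzeroSums.

Definition parity_lift {t} (x : 'rV['F_2]_t) : 'rV['F_2]_(1 + t) := row_mx (const_mx 1) x.

Section ParityExtension.

Variable t : nat.
Implicit Types (E : nat) (P : pred nat).

Lemma parity_lift_inj : injective (@parity_lift t).
Proof. by move=> x y /eq_row_mx[]. Qed.

Lemma sum_parity_lift (A : {set 'rV['F_2]_t}) :
  \sum_(x in A) parity_lift x = row_mx (const_mx 1 *+ #|A|) (\sum_(x in A) x).
Proof.
rewrite -[LHS]hsubmxK !raddf_sum /= -sumr_const.
by congr row_mx; apply: eq_bigr => x _; rewrite ?row_mxKl ?row_mxKr.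
Qed.

Lemma nonzero_sums_parity_lift P (B : {set 'rV['F_2]_t}) :
  nonzero_sums (fun k => P k && ~~ odd k) B -> nonzero_sums P (parity_lift @: B).
Proof.
move=> nzB; apply/nonzero_sums_imset => [x y _ _ /parity_lift_inj //|J JB PJ].
rewrite sum_parity_lift row_mx_eq0 mulrn_F2 negb_and.
have [oddJ | evenJ] := boolP (odd #|J|).
  by apply/orP; left; apply/eqP => /matrixP/(_ 0 0); rewrite !mxE.
by rewrite nzB ?PJ ?evenJ ?orbT.
Qed.

Lemma even_sum_not_submx E (S A : {set 'rV['F_2]_t.+1}) s0 :
  ~~ odd E -> nonzero_sums (fun k => 0 < k < E)%N S -> s0 \in S ->
  A \subset 0 |: (S :\ s0) -> (0 < #|A| < E)%N -> ~~ odd #|A| ->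
  ~~ ((\sum_(x in A) x)%R <= s0)%MS.
Proof.
move=> evenE nzS s0S AX /andP[A0 AE] evenA.
set A' := A :\ 0.
have A'S : A' \subset S :\ s0.
  apply/subsetP => x /[!inE] /andP[x0 /(subsetP AX)].
  by rewrite !inE (negbTE x0).
have sumA' : \sum_(x in A') x = \sum_(x in A) x.
  have [A0' | A0'] := boolP (0 \in A); first by rewrite [RHS](big_setD1 0) //= add0r.
  by apply: eq_bigl => x; rewrite !inE; case: eqP => // ->; rewrite (negbTE A0').
have cardA' : (#|A| <= #|A'|.+1)%N by rewrite (cardsD1 0 A); case: (_ \in _).
have A2 : (1 < #|A|)%N by move: A0 evenA; case: #|A| => [|[|]].
have A'0 : (0 < #|A'|)%N by rewrite -ltnS (leq_trans A2 cardA').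
have A'E : (#|A'|.+1 < E)%N.
  have AE2 : (#|A|.+1 < E)%N.
    by rewrite ltn_neqAle AE andbT; apply: contraNneq evenE => <-; rewrite /= evenA.
  by apply: leq_ltn_trans AE2; rewrite ltnS subset_leq_card ?subD1set.
apply/negP; case/sub_rVP => a suma; have [a0 | /F2_eq1 a1] := eqVneq a 0.
  have := nzS A' (subset_trans A'S (subD1set _ _)).
  by rewrite sumA' suma a0 scale0r eqxx A'0 (ltn_trans _ A'E) // => /(_ isT).
have s0A' : s0 \notin A' by apply/negP => /(subsetP A'S); rewrite !inE eqxx.
have s0A'S : s0 |: A' \subset S.
  apply/subsetP => x; rewrite in_setU1 => /predU1P[-> // | /(subsetP A'S)].
  by rewrite !inE => /andP[].
have := nzS (s0 |: A') s0A'S.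
rewrite big_setU1 //= sumA' suma a1 scale1r addrr_F2 eqxx cardsU1 s0A' A'E andbT.
by move/(_ isT).
Qed.

Lemma puncture_nonzero_sums E (S : {set 'rV['F_2]_t.+1}) s0 :
  ~~ odd E -> (2 < E)%N -> nonzero_sums (fun k => 0 < k < E)%N S -> s0 \in S ->
  exists2 B : {set 'rV['F_2]_t}, #|B| = #|S| &
    nonzero_sums (fun k => (0 < k < E) && ~~ odd k)%N B.
Proof.
move=> evenE E2 nzS s0S.
have S0 : 0 \notin S.
  by apply/nonzero_sums1; exact: (nonzero_sums_pred1 _ _).1 nzS 1%N (ltnW E2).
have s0_neq0 : s0 != 0 by apply: contraNneq S0 => <-.
have [Q kerQ] : exists Q : 'M_(t.+1, t), forall x : 'rV_t.+1,
    (x <= s0)%MS = (x *m Q == 0).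
  by apply: exists_kernel_mx; rewrite rank_rV s0_neq0.
set X := 0 |: (S :\ s0).
have sumQ (A : {set 'rV_t.+1}) : A \subset X -> (0 < #|A| < E)%N -> ~~ odd #|A| ->
    (\sum_(x in A) x) *m Q != 0.
  move=> AX AE evenA; rewrite -kerQ.
  exact: even_sum_not_submx evenE nzS s0S AX AE evenA.
have injQ : {in X &, injective (mulmx^~ Q)}.
  move=> x y xX yX /eqP; apply: contraTeq => xy.
  have := sumQ [set x; y]; rewrite cards2 xy E2 big_setU1 ?big_set1 ?inE //=.
  by rewrite mulmxDl addr_eq0_F2; apply; rewrite // subUset !sub1set xX yX.
exists [set x *m Q | x in X].
  by rewrite card_in_imset // cardsU1 (cardsD1 s0 S) s0S !inE (negbTE S0) andbF.
apply/nonzero_sums_imset => // J JX /andP[JE evenJ].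
by rewrite -mulmx_suml; apply: sumQ.
Qed.

Lemma parity_extension E n : ~~ odd E -> (2 < E)%N -> (0 < n)%N ->
  (exists S : {set 'rV['F_2]_t.+1}, #|S| = n /\ nonzero_sums (fun k => 0 < k < E)%N S)
  <-> (exists B : {set 'rV['F_2]_t}, #|B| = n /\
        nonzero_sums (fun k => (0 < k < E) && ~~ odd k)%N B).
Proof.
move=> evenE E2 n0; split=> [[S [cS nzS]] | [B [cB nzB]]].
  have [s0 s0S] : exists s0, s0 \in S by apply/set0Pn; rewrite -card_gt0 cS.
  by have [B cB nzB] := puncture_nonzero_sums evenE E2 nzS s0S; exists B; rewrite cB.
exists (parity_lift @: B); split; last exact: nonzero_sums_parity_lift.
by rewrite card_imset //; apply: parity_lift_inj.
Qed.

End ParityExtension.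

Section Codes.

Variable n : nat.

Lemma wt_eq0 (v : 'rV['F_2]_n) : (wt v == 0)%N = (v == 0).
Proof.
rewrite /wt cards_eq0; apply/eqP/eqP => [/setP vE | ->]; last first.
  by apply/setP => i; rewrite !inE mxE eqxx.
by apply/rowP => i; move: (vE i); rewrite !inE mxE => /negbFE/eqP.
Qed.

Lemma mulmx_F2_supp t (v : 'rV['F_2]_n) (H : 'M['F_2]_(n, t)) :
  v *m H = \sum_(i in [set i | v 0 i != 0]) row i H.
Proof.
rewrite mulmx_sum_row (bigID (fun i => v 0 i != 0)) /= [X in _ + X]big1 ?addr0.
  by apply: eq_big => [i | i /F2_eq1 ->]; rewrite ?inE ?scale1r.
by move=> i /negPn/eqP ->; rewrite scale0r.
Qed.

Lemma leq_wt_kernelP t D (H : 'M['F_2]_(n, t)) :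
  (forall v : 'rV_n, v *m H = 0 -> v != 0 -> (D <= wt v)%N) <->
  (forall I : {set 'I_n}, (0 < #|I| < D)%N -> \sum_(i in I) row i H != 0).
Proof.
split=> [wtD I /andP[I0 ID] | sumH v vH v0].
  pose v : 'rV['F_2]_n := \row_i (i \in I)%:R.
  have suppv : [set i | v 0 i != 0] = I.
    by apply/setP => i; rewrite !inE mxE; case: (i \in I); rewrite ?oner_eq0 ?eqxx.
  have v0 : v != 0 by rewrite -wt_eq0 /wt suppv -lt0n.
  apply: contraTneq ID => sum0; rewrite -leqNgt -suppv; apply: wtD v0.
  by rewrite mulmx_F2_supp suppv.
rewrite leqNgt; apply/negP => wtD; have := sumH [set i | v 0 i != 0].
by rewrite -/(wt v) lt0n wt_eq0 v0 wtD -mulmx_F2_supp vH eqxx => /(_ isT).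
Qed.

Lemma leq_mindistP k D (G : 'M['F_2]_(k, n)) : (0 < \rank G)%N ->
  (D <= mindist G)%N <-> (forall v : 'rV_n, (v <= G)%MS -> v != 0 -> (D <= wt v)%N).
Proof.
move=> rG; split=> [DG v vG v0 | wtD].
  apply: leq_trans DG _.
  (* [mindist] is a [minn]-fold, which [Order.min] on [nat] matches only up to
     conversion: hence the explicit instances. *)
  have := @Order.TotalTheory.bigmin_le_cond _ nat _ n v
    (fun u => (u <= G)%MS && (u != 0)) (@wt n).
  by rewrite vG v0; apply.
apply/(@Order.TotalTheory.bigmin_geP _ nat _ n); split=> [|v /andP[]]; last exact: wtD.
have [i Gi] : exists i, row i G != 0.
  apply/existsP; apply: contraTT rG => /existsPn G0.
  rewrite lt0n negbK mxrank_eq0; apply/eqP/row_matrixP => i.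
  by rewrite row0; apply/eqP/negbNE/G0.
apply: leq_trans (wtD _ (row_sub i G) Gi) _.
by rewrite /wt -[leqRHS]card_ord max_card.
Qed.

End Codes.

Lemma nonzero_sums_of_code n t D (G : 'M['F_2]_(n - t, n)) :
  (t < n)%N -> (2 < D)%N -> \rank G = (n - t)%N -> (D <= mindist G)%N ->
  exists S : {set 'rV['F_2]_t}, #|S| = n /\ nonzero_sums (fun k => 0 < k < D)%N S.
Proof.
move=> tn D2 rG DG.
have [H kerH] : exists H : 'M_(n, t), forall v : 'rV_n, (v <= G)%MS = (v *m H == 0).
  by apply: exists_kernel_mx; rewrite rG subnK // ltnW.
have sumH : forall I : {set 'I_n}, (0 < #|I| < D)%N -> \sum_(i in I) row i H != 0.
  apply/leq_wt_kernelP => v /eqP; rewrite -kerH => vG.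
  by apply: (leq_mindistP _ _).1 DG v vG; rewrite rG subn_gt0.
have injH : injective (fun i => row i H).
  move=> i j /eqP; apply: contraTeq => ij.
  have := sumH [set i; j]; rewrite cards2 ij D2 big_setU1 ?big_set1 ?inE //=.
  by rewrite addr_eq0_F2; apply.
exists [set row i H | i in [set: 'I_n]]; split.
  by rewrite card_imset // cardsT card_ord.
by apply/nonzero_sums_imset => [i j _ _ /injH | J _] //; apply: sumH.
Qed.

Lemma code_of_nonzero_sums n t D (S : {set 'rV['F_2]_t}) :
  (t < n)%N -> #|S| = n -> nonzero_sums (fun k => 0 < k < D)%N S ->
  exists2 G : 'M['F_2]_(n - t, n), \rank G = (n - t)%N & (D <= mindist G)%N.
Proof.
move=> tn cS nzS.
pose h (i : 'I_n) : 'rV_t := enum_val (cast_ord (esym cS) i).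
have injh : injective h by move=> i j /enum_val_inj/cast_ord_inj.
pose H := \matrix_(i < n) h i.
have hS : [set row i H | i in [set: 'I_n]] \subset S.
  by apply/subsetP => _ /imsetP[i _ ->]; rewrite rowK enum_valP.
have injH : injective (fun i => row i H) by move=> i j; rewrite !rowK => /injh.
have sumH : forall I : {set 'I_n}, (0 < #|I| < D)%N -> \sum_(i in I) row i H != 0.
  have nzH := nonzero_sumsS hS nzS.
  by move=> I; apply: (nonzero_sums_imset _ (in2W injH)).1 nzH I (subsetT I).
have [G rG GK] : exists2 G : 'M_(n - t, n), \rank G = (n - t)%N & (G <= kermx H)%MS.
  by apply: exists_submx_rank; rewrite mxrank_ker leq_sub2l // rank_leq_col.
exists G => //; apply/(leq_mindistP _ _); first by rewrite rG subn_gt0.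
move=> v vG; have vH : v *m H = 0 by apply/eqP; rewrite -sub_kermx (submx_trans vG GK).
exact: (leq_wt_kernelP _ _).2 sumH v vH.
Qed.

Lemma leq_dmax_nonzero_sums n t D : (t < n)%N -> (2 < D)%N ->
  (D <= dmax n (n - t))%N <->
  exists S : {set 'rV['F_2]_t}, #|S| = n /\ nonzero_sums (fun k => 0 < k < D)%N S.
Proof.
move=> tn D2; have D0 : (0 < D)%N by apply: ltn_trans D2.
split=> [/(leq_bigmaxP _ _ D0)[G /eqP rG DG] | [S [cS nzS]]].
  exact: nonzero_sums_of_code DG.
have [G rG DG] := code_of_nonzero_sums tn cS nzS.
by apply/(leq_bigmaxP _ _ D0); exists G; rewrite ?rG.
Qed.

Lemma exists_sidon_card t n :
  (n <= smax t)%N -> exists2 M : {set 'rV['F_2]_t}, sidon M & #|M| = n.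
Proof.
case: n => [_ | n /(leq_bigmaxP _ _ (ltn0Sn n))[M sidM leM]].
  exists set0; last exact: cards0.
  by apply/sidon_nonzero_sums => A /subset_leq_card; rewrite cards0 leqn0 => /eqP->.
have [B BM cB] := exists_subset_card leM; exists B => //.
exact/sidon_nonzero_sums/(nonzero_sumsS BM)/sidon_nonzero_sums.
Qed.

Section Characterizations.

Variables t n : nat.

Lemma exists_nonzero_sums3 :
  (exists S : {set 'rV['F_2]_t}, #|S| = n /\ nonzero_sums (fun k => 0 < k < 3)%N S)
  <-> (n < 2 ^ t)%N.
Proof.
have card_nonzero : #|[set~ (0 : 'rV['F_2]_t)]| = (2 ^ t).-1.
  by rewrite cardsC1 card_rV_F2.
split=> [[S [<- /nonzero_sums_below3 S0]] | lt_n].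
  have S_nonzero : S \subset [set~ 0].
    by apply/subsetP => x xS; rewrite !inE; apply: contraNneq S0 => <-.
  apply: leq_ltn_trans (subset_leq_card S_nonzero) _.
  by rewrite card_nonzero ltn_predL expn_gt0.
have le_n : (n <= #|[set~ 0%R : 'rV['F_2]_t]|)%N.
  by rewrite card_nonzero -ltnS prednK ?expn_gt0.
have [S S_nonzero cS] := exists_subset_card le_n.
exists S; split=> //; apply/nonzero_sums_below3.
by apply/negP => /(subsetP S_nonzero); rewrite !inE eqxx.
Qed.

Lemma exists_nonzero_sums4 : (0 < n)%N ->
  (exists S : {set 'rV['F_2]_t.+1}, #|S| = n /\ nonzero_sums (fun k => 0 < k < 4)%N S)
  <-> (n <= 2 ^ t)%N.
Proof.
move=> n0; apply: (iff_trans (@parity_extension t 4 n isT isT n0)).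
split=> [[B [<- _]] | le_n]; first by rewrite -card_rV_F2 max_card.
have [B _ cB] : exists2 B : {set 'rV['F_2]_t}, B \subset [set: 'rV['F_2]_t] & #|B| = n.
  by apply: exists_subset_card; rewrite cardsT card_rV_F2.
by exists B; split; last exact: nonzero_sums_even_below4.
Qed.

Lemma exists_nonzero_sums5 :
  (exists S : {set 'rV['F_2]_t}, #|S| = n /\ nonzero_sums (fun k => 0 < k < 5)%N S)
  <-> (n < smax t)%N.
Proof.
split=> [[S [<- /nonzero_sums_below5[S0 sidS]]] | lt_n].
  by apply: leq_trans (leq_bigmax_cond _ sidS); rewrite cardsU1 S0.
have [M sidM cM] := exists_sidon_card lt_n.
have [m0 m0M] : exists m0, m0 \in M by apply/set0Pn; rewrite -card_gt0 cM.
pose M' := [set x + m0 | x in M].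
have sidM' : sidon M'.
  by apply/sidon_nonzero_sums/nonzero_sums_translate/sidon_nonzero_sums => // k /eqP->.
have M'0 : 0 \in M' by apply/imsetP; exists m0; rewrite ?addrr_F2.
exists (M' :\ 0); split.
  have := cardsD1 0 M'; rewrite M'0 card_imset ?cM; last exact: addIr.
  by rewrite add1n => -[].
by apply/nonzero_sums_below5; rewrite setD1K // !inE eqxx.
Qed.

Lemma exists_nonzero_sums6 : (0 < n)%N ->
  (exists S : {set 'rV['F_2]_t.+1}, #|S| = n /\ nonzero_sums (fun k => 0 < k < 6)%N S)
  <-> (n <= smax t)%N.
Proof.
move=> n0; apply: (iff_trans (@parity_extension t 6 n isT isT n0)).
split=> [[B [<- /nonzero_sums_even_below6 sidB]] | le_n].
  exact: leq_bigmax_cond.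
have [B sidB cB] := exists_sidon_card le_n.
by exists B; split; last exact/nonzero_sums_even_below6.
Qed.

End Characterizations.

Theorem proposition3p4 (n t : nat) (Hnt : (t < n)%N) (Ht : (2 <= t)%N) :
  [/\ dmax n (n - t) = 3 <-> (2 ^ t.-1 < n < 2 ^ t)%N,
      dmax n (n - t) = 4 <-> (smax t <= n <= 2 ^ t.-1)%N,
      dmax n (n - t) = 5 <-> (smax t.-1 < n < smax t)%N
    & (6 <= dmax n (n - t))%N <-> (n <= smax t.-1)%N].
Proof.
have n0 : (0 < n)%N by apply: leq_ltn_trans Hnt.
case: t Hnt Ht => [|t] // Hnt _ /=; set d := dmax n (n - t.+1).
have dge D (D2 : (2 < D)%N) := leq_dmax_nonzero_sums Hnt D2.
have iffE (b c : bool) : (b <-> c) -> b = c by move=> bc; apply/idP/idP => /bc.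
have d3 : (3 <= d)%N = (n < 2 ^ t.+1)%N.
  exact: iffE (iff_trans (dge 3%N isT) (exists_nonzero_sums3 _ _)).
have d4 : (4 <= d)%N = (n <= 2 ^ t)%N.
  exact: iffE (iff_trans (dge 4%N isT) (exists_nonzero_sums4 _ n0)).
have d5 : (5 <= d)%N = (n < smax t.+1)%N.
  exact: iffE (iff_trans (dge 5%N isT) (exists_nonzero_sums5 _ _)).
have d6 : (6 <= d)%N = (n <= smax t)%N.
  exact: iffE (iff_trans (dge 6%N isT) (exists_nonzero_sums6 _ n0)).
have eq_d k : d = k <-> (k <= d)%N && ~~ (k < d)%N.
  by rewrite -leqNgt -eqn_leq eq_sym; split=> [-> | /eqP].
split.
- by apply: iff_trans (eq_d 3%N) _; rewrite d3 d4 -ltnNge andbC.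
- by apply: iff_trans (eq_d 4%N) _; rewrite d4 d5 -leqNgt andbC.
- by apply: iff_trans (eq_d 5%N) _; rewrite d5 d6 -ltnNge andbC.
- by rewrite d6.
Qed.
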